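(* Let $S_{p/q}=\{\mathrm{span}(n) : n\in\mathbb{N}\}\subseteq\mathbb{R}$. (i) If $p<2q$, then $S_{p/q}$ is dense in the interval $[0,\ \rho(M_0)]$. (ii) If $p>2q$, then $S_{p/q}$ is nowhere dense in $\mathbb{R}$.
   Context: Let $p>q>1$ be coprime integers, $A_p=\{0,\dots,p-1\}$, $A_q=\{0,\dots,q-1\}$. For $n\in\mathbb{N}$ and $a\in\mathbb{Z}$, let $\tau(n,a)=\frac{np+a}{q}$, defined only when $q$ divides $np+a$. Let $\mathcal{T}_{p/q}$ be the deterministic automaton with state set $\mathbb{N}$, alphabet $A_p$, initial state $0$, and transitions $n\xrightarrow{a}\tau(n,a)$ for $a\in A_p$ with $\tau(n,a)$ defined. Every state $n$ has exactly one outgoing transition labelled by a letter of $A_q$ and exactly one labelled by a letter of $\{p-q,\dots,p-1\}$; the minimal word $\mu_n$ (resp. maximal word $M_n$) is the unique infinite word over $A_q$ (resp. over $\{p-q,\dots,p-1\}$) labelling a path of $\mathcal{T}_{p/q}$ starting at state $n$. For an infinite word $a_1a_2a_3\cdots$ of integers, its real value is $\rho(a_1a_2\cdots)=\sum_{i\ge 1} a_i\left(\frac{p}{q}\right)^{-i}$. The span of $n$ is $\mathrm{span}(n)=\rho(M_n)-\rho(\mu_n)$. *)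

From mathcomp Require Import all_boot all_order all_algebra.
From mathcomp Require Import all_classical all_reals all_analysis.
Set Implicit Arguments. Unset Strict Implicit. Unset Printing Implicit Defensive.
Import Order.TTheory GRing.Theory Num.Theory.
Import numFieldNormedType.Exports.

Definition trans (p q n a m : nat) : bool :=
  [&& a < p, q %| n * p + a & m == (n * p + a) %/ q].

(* An infinite word w (w i is its (i+1)-th letter) labels a path of
   T_{p/q} starting at state n. *)
Definition labels_path (p q n : nat) (w : nat -> nat) : Prop :=
  exists s : nat -> nat, s 0 = n /\ forall i, trans p q (s i) (w i) (s i.+1).

(* The unique letter of A_q (resp. of {p-q,...,p-1}) labelling a transition
   out of state n. *)
Definition min_letter (p q n : nat) : nat := q.-1 - ((n * p + q.-1) %% q).
Definition max_letter (p q n : nat) : nat := p.-1 - ((n * p + p.-1) %% q).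

Fixpoint min_state (p q n i : nat) : nat :=
  if i is i'.+1 then
    let m := min_state p q n i' in (m * p + min_letter p q m) %/ q
  else n.
Fixpoint max_state (p q n i : nat) : nat :=
  if i is i'.+1 then
    let m := max_state p q n i' in (m * p + max_letter p q m) %/ q
  else n.

(* mu_n and M_n, as infinite words (index i = letter number i+1). *)
Definition minword (p q n : nat) : nat -> nat :=
  fun i => min_letter p q (min_state p q n i).
Definition maxword (p q n : nat) : nat -> nat :=
  fun i => max_letter p q (max_state p q n i).

Local Open Scope ring_scope.

Definition rho (R : realType) (p q : nat) (w : nat -> nat) : R :=
  limn (series (fun i : nat => ((w i)%:R * (q%:R / p%:R) ^+ i.+1 : R))).

Definition span (R : realType) (p q n : nat) : R :=
  rho R p q (maxword p q n) - rho R p q (minword p q n).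

Definition spans (R : realType) (p q : nat) : set R :=
  [set x | exists n : nat, x = span R p q n].

Arguments rho R p q w : clear implicits.
Arguments span R p q n : clear implicits.
Arguments spans R p q : clear implicits.

From Pilot Require Import Defs.
From mathcomp Require Import all_boot all_order all_algebra.
From mathcomp Require Import all_classical all_reals all_analysis.
From mathcomp Require Import zify ring lra.
Set Implicit Arguments. Unset Strict Implicit. Unset Printing Implicit Defensive.
Import Order.TTheory GRing.Theory Num.Theory.
Import numFieldNormedType.Exports.

(** Write [x = q/p] and let [D_N(n)] be the distance between the [N]-th states of the
    maximal and minimal paths from [n]. Telescoping the transition equations
    [s_(k+1) q = s_k p + a_k] along both paths shows that [span n] lies within [K x^N] of
    [q D_N(n) x^N], where [K = pq/(p-q)] bounds the tail of any word over [A_p].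
    The gap obeys [D_(N+1) = (p D_N + p - 1 - a_N) div q], where [a_N < q] is the [N]-th
    letter of [mu_n]; so [D_(N+1)] is one of two consecutive integers determined by [D_N],
    and [D_N(n)] takes at most [2^N] values.
    If [p > 2q], the spans therefore lie in [2^N] intervals of length [2 K x^N], of total
    length [2 K (2x)^N], which tends to [0].
    If [p < 2q], the ranges of this step from consecutive values of [D_N] overlap, so every
    integer in [[0, D_N(0)]] is the gap of some prefix of letters in [A_q]; as [p] and [q]
    are coprime, every such prefix starts some [mu_n]. Since [span 0 = rho M_0], the points
    [q v x^N] with [v <= D_N(0)] form a mesh of [[0, rho M_0]] of step [q x^N], each of
    them [K x^N]-close to a span. *)

Lemma dvdn_add_sub_mod q c m : (0 < q)%N -> (q <= c.+1)%N ->
  (q %| m + (c - (m + c) %% q))%N.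
Proof.
move=> q_gt0 le_qc; have := ltn_pmod (m + c) q_gt0.
have -> : (m + (c - (m + c) %% q) = (m + c) %/ q * q)%N by lia.
by rewrite dvdn_mull.
Qed.

Lemma min_letter_lt p q n : (0 < q)%N -> (min_letter p q n < q)%N.
Proof. by rewrite /min_letter; lia. Qed.

Lemma min_state_succ p q n k : (0 < q)%N ->
  (min_state p q n k.+1 * q = min_state p q n k * p + minword p q n k)%N.
Proof. by move=> q_gt0; rewrite /= divnK // dvdn_add_sub_mod //; lia. Qed.

Lemma max_state_succ p q n k : (0 < q)%N -> (q <= p)%N ->
  (max_state p q n k.+1 * q = max_state p q n k * p + maxword p q n k)%N.
Proof. by move=> q_gt0 le_qp; rewrite /= divnK // dvdn_add_sub_mod //; lia. Qed.

(* [state_gap p q w k] is [D_k(n)] for every [n] whose minimal word is [w] ([max_stateE]). *)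
Fixpoint state_gap (p q : nat) (w : nat -> nat) (k : nat) : nat :=
  if k is k'.+1 then (p * state_gap p q w k' + p.-1 - w k') %/ q else 0.

Lemma max_stateE p q n k : (0 < q)%N -> (q < p)%N ->
  max_state p q n k = (min_state p q n k + state_gap p q (minword p q n) k)%N.
Proof.
move=> q_gt0 lt_qp; elim: k => [|k IHk] /=; first by rewrite addn0.
rewrite IHk; set s := min_state p q n k; set d := state_gap _ _ _ k.
set a := min_letter p q s; set X := (p * d + p.-1 - a)%N.
have lt_aq : (a < q)%N by apply: min_letter_lt.
have [s' def_s'] : exists s', (s * p + a = s' * q)%N.
  by exists (min_state p q n k.+1); rewrite min_state_succ.
have := ltn_pmod X q_gt0; have := divn_eq X q => def_X lt_Xq.
have def_sdp : ((s + d) * p + p.-1 = s' * q + X)%N by rewrite /X; lia.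
rewrite /max_letter def_sdp modnMDl.
have -> : ((s + d) * p + (p.-1 - X %% q) = (s' + X %/ q) * q)%N by lia.
by rewrite def_s' !mulnK.
Qed.

Lemma eq_state_gap p q (w w' : nat -> nat) N : (forall k, (k < N)%N -> w k = w' k) ->
  state_gap p q w N = state_gap p q w' N.
Proof.
elim: N => //= N IHN eq_ww'.
by rewrite IHN ?eq_ww' // => k lt_kN; apply: eq_ww'; apply: ltnW.
Qed.

Lemma divn_shift_le q X Y : (0 < q)%N -> (Y <= X <= Y + q)%N ->
  X %/ q = Y %/ q \/ X %/ q = (Y %/ q).+1.
Proof.
move=> q_gt0 /andP [le_YX le_XYq]; have := leq_div2r q le_YX.
have : (X %/ q <= (Y + 1 * q) %/ q)%N by apply: leq_div2r; lia.
by rewrite divnDMl //; lia.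
Qed.

Definition gap_lo p q d := ((p * d + p.-1 - q.-1) %/ q)%N.

Lemma state_gap_succ p q w k : (0 < q)%N -> (q < p)%N -> (w k < q)%N ->
  state_gap p q w k.+1 = gap_lo p q (state_gap p q w k) \/
  state_gap p q w k.+1 = (gap_lo p q (state_gap p q w k)).+1.
Proof.
move=> q_gt0 lt_qp lt_wq; rewrite [state_gap _ _ _ k.+1]/=.
by apply: divn_shift_le; lia.
Qed.

Lemma state_gap_succ_bounds p q w k : (0 < q)%N -> (q < p)%N -> (w k < q)%N ->
  (q * state_gap p q w k.+1 <= p * state_gap p q w k + p)%N /\
  (p * state_gap p q w k <= q * state_gap p q w k.+1 + p)%N.
Proof.
move=> q_gt0 lt_qp lt_wq /=; set X := (_ + _ - _)%N.
by have := divn_eq X q; have := ltn_pmod X q_gt0; lia.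
Qed.

Fixpoint gap_values p q N : seq nat :=
  if N is N'.+1 then
    [seq gap_lo p q d | d <- gap_values p q N'] ++
    [seq (gap_lo p q d).+1 | d <- gap_values p q N']
  else [:: 0%N].

Lemma size_gap_values p q N : size (gap_values p q N) = (2 ^ N)%N.
Proof. by elim: N => //= N IHN; rewrite size_cat !size_map IHN expnS mul2n addnn. Qed.

Lemma state_gap_in_values p q w N : (0 < q)%N -> (q < p)%N -> (forall k, (w k < q)%N) ->
  state_gap p q w N \in gap_values p q N.
Proof.
move=> q_gt0 lt_qp lt_wq; elim: N => [|N IHN]; first by rewrite inE.
rewrite [gap_values _ _ _.+1]/= mem_cat; case: (state_gap_succ q_gt0 lt_qp (lt_wq N)) => ->.
  by rewrite map_f.
by rewrite (map_f (fun d => (gap_lo p q d).+1)) ?orbT.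
Qed.

Lemma gap_step_onto p q e v : (0 < q)%N ->
  (gap_lo p q e <= v <= (p * e + p.-1) %/ q)%N ->
  exists2 a, (a < q)%N & ((p * e + p.-1 - a) %/ q)%N = v.
Proof.
rewrite /gap_lo => q_gt0 /andP [le_lo_v le_v_hi].
have le_qv : (q * v <= p * e + p.-1)%N by rewrite mulnC -leq_divRL.
case: (leqP (p * e + p.-1 - q.-1) (q * v)) => [le_Yqv|lt_qvY].
  exists (p * e + p.-1 - q * v)%N; first by lia.
  have -> : (p * e + p.-1 - (p * e + p.-1 - q * v) = v * q)%N by lia.
  by rewrite mulnK.
exists q.-1; first by lia.
by apply/eqP; rewrite eqn_leq le_lo_v leq_divRL //; lia.
Qed.

Lemma gap_step_cover p q M v : (0 < q)%N -> (q < p < 2 * q)%N ->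
  (v <= (p * M + p.-1) %/ q)%N ->
  exists2 e, (e <= M)%N & exists2 a, (a < q)%N & ((p * e + p.-1 - a) %/ q)%N = v.
Proof.
move=> q_gt0 /andP [lt_qp lt_p2q]; elim: M v => [|M IHM] v le_v_hi.
  exists 0%N => //; apply: gap_step_onto => //.
  by rewrite le_v_hi andbT /gap_lo divn_small //; lia.
case: (leqP v ((p * M + p.-1) %/ q)) => [le_v_hiM|lt_hiM_v].
  by have [e le_eM step_e] := IHM v le_v_hiM; exists e => //; apply: leqW.
exists M.+1 => //; apply: gap_step_onto => //; rewrite le_v_hi andbT /gap_lo.
have le_AB : (p * M + p.-1 <= p * M.+1 + p.-1 - q.-1 <= p * M + p.-1 + q)%N.
  by rewrite mulnS; lia.
by case: (divn_shift_le q_gt0 le_AB) => ->; [apply: ltnW|].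
Qed.

Lemma state_gap_onto p q N v : (0 < q)%N -> (q < p < 2 * q)%N ->
  (v <= state_gap p q (fun=> 0%N) N)%N ->
  exists2 w, (forall k, (w k < q)%N) & state_gap p q w N = v.
Proof.
move=> q_gt0 lt_qp2q; elim: N v => [|N IHN] v.
  by rewrite leqn0 => /eqP ->; exists (fun=> 0%N).
rewrite /= subn0 => /(gap_step_cover q_gt0 lt_qp2q) [e le_e_gap [a lt_aq step_e]].
have [w lt_wq gap_w] := IHN e le_e_gap.
exists (fun k => if k == N then a else w k) => [k|/=]; first by case: ifP.
rewrite eqxx -step_e -gap_w (@eq_state_gap _ _ _ w) // => k lt_kN.
by rewrite ifN // neq_ltn lt_kN.
Qed.

Lemma min_letter_addqM p q n c : min_letter p q (n + q * c) = min_letter p q n.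
Proof.
rewrite /min_letter.
have -> : ((n + q * c) * p + q.-1 = c * p * q + (n * p + q.-1))%N by ring.
by rewrite modnMDl.
Qed.

Lemma min_state_add_qexp p q n t N k : (0 < q)%N -> (k <= N)%N ->
  min_state p q (n + q ^ N * t) k = (min_state p q n k + p ^ k * q ^ (N - k) * t)%N.
Proof.
move=> q_gt0; elim: k => [|k IHk] le_kN; first by rewrite subn0 expn0 mul1n.
rewrite /= IHk; last by lia.
have -> : (N - k = (N - k.+1).+1)%N by lia.
set s := min_state p q n k; set c := (p ^ k * q ^ (N - k.+1) * t)%N.
have -> : (p ^ k * q ^ (N - k.+1).+1 * t = q * c)%N by rewrite expnS /c; ring.
rewrite min_letter_addqM.
have -> : ((s + q * c) * p + min_letter p q s = c * p * q + (s * p + min_letter p q s))%N by ring.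
by rewrite divnMDl // addnC /c expnS; congr (_ + _)%N; ring.
Qed.

Lemma coprime_inv_mod P q : (1 < q)%N -> (0 < P)%N -> coprime P q ->
  exists i, ((i * P) %% q = 1)%N.
Proof.
move=> q_gt1 P_gt0 /(coprimeP _ P_gt0) [[u v] /= uv].
exists u; have -> : (u * P = v * q + 1)%N by lia.
by rewrite modnMDl modn_small.
Qed.

(* Since [p ^ N] is invertible modulo [q], adding a suitable multiple of [q ^ N] to [n]
   sets the [N]-th minimal letter without changing the earlier ones. *)
Lemma exists_minword_prefix p q (u : nat -> nat) N : (1 < q)%N -> coprime p q ->
  (forall k, (u k < q)%N) -> exists n, forall k, (k < N)%N -> minword p q n k = u k.
Proof.
move=> q_gt1 cop_pq u_lt; have q_gt0 : (0 < q)%N by lia.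
have p_gt0 : (0 < p)%N by case: p cop_pq => //; rewrite /coprime gcd0n => /eqP; lia.
elim: N => [|N [n prefix_n]]; first by exists 0%N.
have [i inv_i] : exists i, ((i * p ^ N.+1) %% q = 1)%N.
  by apply: coprime_inv_mod; rewrite ?expn_gt0 ?p_gt0 ?coprimeXl.
set s := min_state p q n N; set B := (s * p + q.-1)%N.
set c := (q.-1 - u N + q - B %% q)%N.
exists (n + q ^ N * (i * c))%N => k; rewrite ltnS => le_kN.
rewrite /minword min_state_add_qexp //.
case: (ltnP k N) => [lt_kN'|le_Nk].
  have -> : (N - k = (N - k.+1).+1)%N by lia.
  have -> : (p ^ k * q ^ (N - k.+1).+1 * (i * c) = q * (p ^ k * q ^ (N - k.+1) * (i * c)))%N.
    by rewrite expnS; ring.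
  by rewrite min_letter_addqM; apply: prefix_n.
have -> : k = N by lia.
rewrite subnn muln1 /min_letter -/s.
have -> : ((s + p ^ N * (i * c)) * p + q.-1 = B + i * p ^ N.+1 * c)%N.
  by rewrite /B expnS; ring.
rewrite -modnDmr -modnMml inv_i mul1n modnDmr.
have := ltn_pmod B q_gt0; have := u_lt N => lt_uN lt_Bq.
have -> : (B + c = (B %/ q).+1 * q + (q.-1 - u N))%N by rewrite /c; lia.
by rewrite modnMDl modn_small; lia.
Qed.

Lemma min_state_0 p q k : (0 < q)%N -> min_state p q 0 k = 0%N.
Proof.
move=> q_gt0; elim: k => //= k ->.
by rewrite /min_letter modn_small ?subnn ?divn_small //; lia.
Qed.

Lemma minword_0 p q k : (0 < q)%N -> minword p q 0 k = 0%N.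
Proof. by move=> q_gt0; rewrite /minword min_state_0 // /min_letter modn_small ?subnn //; lia. Qed.

Local Open Scope classical_set_scope.
Local Open Scope ring_scope.

Lemma exists_geom_lt (R : archiRealFieldType) (a C e : R) : 0 <= a < 1 -> 0 <= C -> 0 < e ->
  exists N : nat, C * a ^+ N < e.
Proof.
move=> /andP [a_ge0 a_lt1] C_ge0 e_gt0.
have C1_gt0 : 0 < C + 1 by rewrite ltr_wpDl.
have : `|a| < 1 by rewrite ger0_norm.
move=> /cvg_expr /cvgr0_norm_lt /(_ (e / (C + 1))) [|N _ small_aN].
  by rewrite divr_gt0.
exists N; have := small_aN N (leqnn N); rewrite ger0_norm ?exprn_ge0 // ltr_pdivlMr //.
have : C * a ^+ N <= a ^+ N * (C + 1) by rewrite mulrC ler_wpM2l ?exprn_ge0 ?lerDl.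
lra.
Qed.

Lemma cover_length_le (R : realFieldType) (w a b : R) (s : seq R) : 0 <= w ->
  (forall y, a <= y < b -> exists2 c, c \in s & c <= y < c + w) ->
  b - a <= (size s)%:R * w.
Proof.
move=> w_ge0; move En : (size s) => n; elim: n s a En => [|n IHn] s a size_s cover.
  case: (leP b a) => [le_ba|lt_ab]; first by rewrite mul0r subr_le0.
  have a_ab : a <= a < b by rewrite lexx lt_ab.
  by have [c] := cover a a_ab; move: size_s => /size0nil ->.
case: (leP b a) => [le_ba|lt_ab].
  by rewrite (le_trans _ (mulr_ge0 (ler0n _ _) w_ge0)) // subr_le0.
have a_ab : a <= a < b by rewrite lexx lt_ab.
have [c c_s /andP [le_ca lt_acw]] := cover a a_ab.
suff : b - (c + w) <= n%:R * w by rewrite -natr1 mulrDl mul1r; lra.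
apply: (IHn (rem c s)) => [|y /andP [le_cwy lt_yb]]; first by rewrite size_rem // size_s.
have y_ab : a <= y < b by rewrite lt_yb andbT; lra.
have [c' c'_s /andP [le_c'y lt_yc'w]] := cover y y_ab.
exists c'; last by rewrite le_c'y lt_yc'w.
by apply: rem_mem c'_s; apply/eqP => eq_c'c; move: lt_yc'w; rewrite eq_c'c; lra.
Qed.

Lemma mesh_approx (R : archiRealFieldType) (h E y : R) M : 0 < h -> 0 <= E ->
  0 <= y <= M%:R * h + E -> exists2 v, (v <= M)%N & `|y - v%:R * h| <= h + E.
Proof.
move=> h_gt0 E_ge0 /andP [y_ge0 le_y_top].
have /andP [le_ty lt_yt] := truncn_itv (divr_ge0 y_ge0 (ltW h_gt0)).
rewrite ler_pdivlMr // ltr_pdivrMr // in le_ty lt_yt.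
case: (leqP (Num.truncn (y / h)) M) => [le_tM|lt_Mt].
  exists (Num.truncn (y / h)) => //; rewrite ler_norml; apply/andP; split.
    rewrite -natr1 mulrDl mul1r in lt_yt; lra.
  lra.
exists M => //; rewrite ler_norml.
have : M%:R * h <= (Num.truncn (y / h))%:R * h by rewrite ler_pM2r // ler_nat ltnW.
lra.
Qed.

Section SpanApproximation.
Variables (R : realType) (p q : nat).
Hypotheses (q_gt1 : (1 < q)%N) (lt_qp : (q < p)%N).

Local Notation ratio := (q%:R / p%:R : R).
(* [tailc * ratio ^+ N] is the sum of [p * ratio ^+ i.+1] over [i >= N] ([tailc_step]). *)
Local Notation tailc := (p%:R * q%:R / (p%:R - q%:R) : R).

Let q_gt0 : (0 < q)%N. Proof. by apply: ltnW. Qed.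
Let p_gt0 : (0 < p)%N. Proof. by apply: ltn_trans lt_qp. Qed.

Lemma ratio_gt0 : 0 < ratio.
Proof. by rewrite divr_gt0 ?ltr0n. Qed.

Lemma ratio_lt1 : ratio < 1.
Proof. by rewrite ltr_pdivrMr ?ltr0n // mul1r ltr_nat. Qed.

Lemma tailc_gt0 : 0 < tailc.
Proof. by rewrite divr_gt0 ?mulr_gt0 ?ltr0n // subr_gt0 ltr_nat. Qed.

Lemma tailc_step k : tailc * ratio ^+ k - tailc * ratio ^+ k.+1 = p%:R * ratio ^+ k.+1.
Proof.
have p_neq0 : p%:R != 0 :> R by rewrite pnatr_eq0 -lt0n.
have pq_neq0 : p%:R - q%:R != 0 :> R by rewrite subr_eq0 eqr_nat gtn_eqF.
by rewrite exprS; field; rewrite p_neq0 pq_neq0.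
Qed.

Lemma series_path_telescope (s a : nat -> nat) N :
  (forall k, s k.+1 * q = s k * p + a k)%N ->
  series (fun i => (a i)%:R * ratio ^+ i.+1) N =
  q%:R * (s N)%:R * ratio ^+ N - q%:R * (s 0%N)%:R.
Proof.
move=> path_s; have p_neq0 : p%:R != 0 :> R by rewrite pnatr_eq0 -lt0n.
rewrite /series /=; elim: N => [|N IHN]; first by rewrite big_geq // expr0 mulr1 subrr.
rewrite big_nat_recr //= IHN.
have : ((s N.+1 * q)%N%:R : R) = (s N * p + a N)%N%:R by rewrite path_s.
rewrite natrD !natrM => path_sN.
have -> : (a N)%:R = (s N.+1)%:R * q%:R - (s N)%:R * p%:R :> R by rewrite path_sN; ring.
by rewrite exprS; field.
Qed.

Lemma series_word_le (w : nat -> nat) N : (forall i, (w i <= p)%N) ->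
  series (fun i => (w i)%:R * ratio ^+ i.+1) N <= tailc - tailc * ratio ^+ N.
Proof.
move=> le_wp; rewrite /series /=; elim: N => [|N IHN].
  by rewrite big_geq // expr0 mulr1 subrr.
rewrite big_nat_recr //= -[tailc - _](subrKA (tailc * ratio ^+ N)) tailc_step lerD //.
by rewrite ler_wpM2r ?exprn_ge0 ?(ltW ratio_gt0) // ler_nat.
Qed.

Lemma is_cvg_word_series (w : nat -> nat) : (forall i, (w i <= p)%N) ->
  cvgn (series (fun i => (w i)%:R * ratio ^+ i.+1)).
Proof.
move=> le_wp; apply: nondecreasing_is_cvgn.
  apply: (@nondecreasing_series _ _ xpredT 0%N) => n _ _.
  by rewrite mulr_ge0 ?exprn_ge0 ?(ltW ratio_gt0).
exists tailc => _ [N _ <-]; apply: le_trans (series_word_le N le_wp) _.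
by rewrite lerBlDr lerDl mulr_ge0 ?exprn_ge0 ?(ltW ratio_gt0) ?(ltW tailc_gt0).
Qed.

Definition span_approx n N : R :=
  q%:R * (state_gap p q (minword p q n) N)%:R * ratio ^+ N.

Lemma series_max_sub_min n N :
  series (fun i => (maxword p q n i)%:R * ratio ^+ i.+1) N -
  series (fun i => (minword p q n i)%:R * ratio ^+ i.+1) N = span_approx n N.
Proof.
rewrite (@series_path_telescope (max_state p q n)); last first.
  by move=> k; apply: max_state_succ (ltnW lt_qp).
rewrite (@series_path_telescope (min_state p q n)); last first.
  by move=> k; apply: min_state_succ.
by rewrite /span_approx max_stateE // natrD /=; ring.
Qed.

Lemma span_approx_cvg n : span_approx n @ \oo --> Defs.span R p q n.
Proof.
have le_maxp i : (maxword p q n i <= p)%N by rewrite /maxword /max_letter; lia.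
have le_minp i : (minword p q n i <= p)%N.
  by apply: ltnW; apply: ltn_trans lt_qp; apply: min_letter_lt.
rewrite /span /rho -(funext (series_max_sub_min n)).
exact: cvgB (is_cvg_word_series le_maxp) (is_cvg_word_series le_minp).
Qed.

Lemma span_approx_step n k :
  `|span_approx n k.+1 - span_approx n k| <= p%:R * ratio ^+ k.+1.
Proof.
have p_neq0 : p%:R != 0 :> R by rewrite pnatr_eq0 -lt0n.
set D' := state_gap p q (minword p q n) k.+1; set D := state_gap p q (minword p q n) k.
have [le_D' le_D] := @state_gap_succ_bounds p q (minword p q n) k q_gt0 lt_qp (min_letter_lt _ _ q_gt0).
have -> : span_approx n k.+1 - span_approx n k = (q%:R * D'%:R - p%:R * D%:R) * ratio ^+ k.+1.
  by rewrite /span_approx -/D -/D' exprS; field.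
have ratio_k_ge0 : 0 <= ratio ^+ k.+1 by rewrite exprn_ge0 ?(ltW ratio_gt0).
rewrite normrM [`|ratio ^+ _|]ger0_norm // ler_wpM2r //.
rewrite -(ler_nat R) natrD !natrM -/D -/D' in le_D'.
rewrite -(ler_nat R) natrD !natrM -/D -/D' in le_D.
by rewrite ler_norml; apply/andP; split; lra.
Qed.

Lemma span_approx_cauchy n N M : (N <= M)%N ->
  `|span_approx n M - span_approx n N| <= tailc * ratio ^+ N - tailc * ratio ^+ M.
Proof.
elim: M => [|M IHM]; first by rewrite leqn0 => /eqP ->; rewrite !subrr normr0.
rewrite leq_eqVlt => /predU1P [<-|]; first by rewrite !subrr normr0.
rewrite ltnS => /IHM le_MN; have := span_approx_step n M; rewrite -tailc_step => le_step.
rewrite -(subrKA (span_approx n M)); apply: le_trans (ler_normD _ _) _; lra.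
Qed.

Lemma span_approx_err n N : `|Defs.span R p q n - span_approx n N| <= tailc * ratio ^+ N.
Proof.
have le_near M : (N <= M)%N ->
    span_approx n N - tailc * ratio ^+ N <= span_approx n M <= span_approx n N + tailc * ratio ^+ N.
  move=> /(span_approx_cauchy n) /ler_normlP [le1 le2].
  have := exprn_ge0 M (ltW ratio_gt0); have := ltW tailc_gt0 => ? ?.
  by apply/andP; split; nra.
have lim_span := cvg_lim (@Rhausdorff R) (@span_approx_cvg n).
rewrite ler_norml -lim_span; apply/andP; split.
- rewrite lerBrDr; apply: limr_ge; first exact: (cvgP _ (@span_approx_cvg n)).
  by exists N => // M /le_near /andP [? _]; lra.
- rewrite lerBlDr; apply: limr_le; first exact: (cvgP _ (@span_approx_cvg n)).
  by exists N => // M /le_near /andP [_ ?]; lra.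
Qed.

Lemma span_0 : Defs.span R p q 0 = rho R p q (maxword p q 0).
Proof.
rewrite /Defs.span [rho _ _ _ (minword p q 0)]/rho.
rewrite (_ : series _ = cst 0) ?lim_cst ?subr0 //.
by apply/funext => N; rewrite /series /= big1 // => i _; rewrite minword_0 // mul0r.
Qed.

Lemma closure_spans_near_gap_values y N : closure (spans R p q) y ->
  exists2 d, d \in gap_values p q N &
    `|y - q%:R * d%:R * ratio ^+ N| < 2 * tailc * ratio ^+ N.
Proof.
have e_gt0 : 0 < tailc * ratio ^+ N by rewrite mulr_gt0 ?exprn_gt0 ?ratio_gt0 ?tailc_gt0.
move=> /(_ _ (nbhsx_ballx y _ e_gt0)) [_ [[n ->]]]; rewrite -ball_normE /= => near_n.
exists (state_gap p q (minword p q n) N).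
  by apply: state_gap_in_values => // k; apply: min_letter_lt.
have := span_approx_err n N; rewrite /span_approx => near_approx.
by apply: le_lt_trans (ler_distD (Defs.span R p q n) _ _) _; lra.
Qed.

Lemma interior_closure_spans : (2 * q < p)%N -> interior (closure (spans R p q)) = set0.
Proof.
move=> lt_2qp; apply/seteqP; split => // z /nbhs_ballP [r /= r_gt0 ball_sub].
have lt_2ratio : 2 * ratio < 1 by rewrite mulrA ltr_pdivrMr ?ltr0n // mul1r -natrM ltr_nat.
have [N small_N] : exists N, 4 * tailc * (2 * ratio) ^+ N < r / 2.
  apply: exists_geom_lt; last by rewrite divr_gt0.
  - by rewrite lt_2ratio mulr_ge0 ?(ltW ratio_gt0).
  - by rewrite mulr_ge0 ?(ltW tailc_gt0).
pose c_ d := q%:R * d%:R * ratio ^+ N - 2 * tailc * ratio ^+ N.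
have cover y : z - r / 2 <= y < z + r / 2 ->
    exists2 c, c \in map c_ (gap_values p q N) & c <= y < c + 4 * tailc * ratio ^+ N.
  move=> /andP [le_y lt_y].
  have cl_y : closure (spans R p q) y.
    by apply: ball_sub; rewrite -ball_normE /= ltr_norml; apply/andP; split; lra.
  have [d d_in near_d] := @closure_spans_near_gap_values y N cl_y.
  exists (c_ d); first exact: map_f.
  by move: near_d; rewrite /c_ ltr_norml => /andP [? ?]; apply/andP; split; lra.
have width_ge0 : 0 <= 4 * tailc * ratio ^+ N.
  by rewrite mulr_ge0 ?exprn_ge0 ?(ltW ratio_gt0) // mulr_ge0 ?(ltW tailc_gt0).
have := cover_length_le width_ge0 cover.
rewrite size_map size_gap_values natrX.
have -> : 2 ^+ N * (4 * tailc * ratio ^+ N) = 4 * tailc * (2 * ratio) ^+ N.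
  by rewrite [(2 * _) ^+ _]exprMn; ring.
lra.
Qed.

Lemma itv_sub_closure_spans : coprime p q -> (p < 2 * q)%N ->
  `[0, rho R p q (maxword p q 0)] `<=` closure (spans R p q).
Proof.
move=> cop_pq lt_p2q y; rewrite /= in_itv /= => /andP [y_ge0 le_y_top].
move=> B /nbhs_ballP [e /= e_gt0 ball_sub].
have [N small_N] : exists N, (2 * tailc + q%:R) * ratio ^+ N < e.
  apply: exists_geom_lt => //; first by rewrite ratio_lt1 ltW ?ratio_gt0.
  by have := tailc_gt0; have : 0 <= q%:R :> R := ler0n _ _; lra.
set err := tailc * ratio ^+ N; set h := q%:R * ratio ^+ N.
have err_ge0 : 0 <= err by rewrite mulr_ge0 ?exprn_ge0 ?(ltW ratio_gt0) ?(ltW tailc_gt0).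
have h_gt0 : 0 < h by rewrite mulr_gt0 ?exprn_gt0 ?ratio_gt0 ?ltr0n.
set M := state_gap p q (fun=> 0%N) N.
have y_mesh : 0 <= y <= M%:R * h + err.
  have := @span_approx_err 0 N; rewrite span_0 /span_approx.
  rewrite (@eq_state_gap _ _ _ (fun=> 0%N)) => [|k _]; last by rewrite minword_0.
  by rewrite y_ge0 /= -/M -/err ler_norml => /andP [_ ?]; rewrite /h; lra.
have [v le_vM near_v] := mesh_approx h_gt0 err_ge0 y_mesh.
have [w lt_wq gap_w] := state_gap_onto q_gt0 (introT andP (conj lt_qp lt_p2q)) le_vM.
have [n prefix_n] := exists_minword_prefix N q_gt1 cop_pq lt_wq.
have gap_n : state_gap p q (minword p q n) N = v by rewrite -gap_w; apply: eq_state_gap.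
exists (Defs.span R p q n); split; first by exists n.
apply: ball_sub; rewrite -ball_normE /=.
have := @span_approx_err n N; rewrite /span_approx gap_n distrC.
have -> : q%:R * v%:R * ratio ^+ N = v%:R * h by rewrite /h; ring.
move=> near_n; apply: le_lt_trans (ler_distD (v%:R * h) _ _) _.
by move: near_v near_n small_N; rewrite /h /err; lra.
Qed.
End SpanApproximation.

Theorem mainTheorem10 (R : realType) (p q : nat) :
  (1 < q)%N -> (q < p)%N -> coprime p q ->
  ((p < 2 * q)%N ->
     `[0, rho R p q (maxword p q 0)] `<=` closure (spans R p q)) /\
  ((2 * q < p)%N -> interior (closure (spans R p q)) = set0).
Proof.
move=> q_gt1 lt_qp cop_pq; split.
- exact: itv_sub_closure_spans.
- exact: interior_closure_spans.
Qed.
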